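(* Let $X$ be a metric space and $\mathcal G\subseteq\mathcal H(X)$ a subgroup. If $X$ is $\mathcal G$-shift-compact, then $X$ is a Baire space.
   Context: $(X,d^X)$ is a metric space. $\mathcal H(X)$ is the group (under composition) of autohomeomorphisms $h$ of $X$ with $\sup_{x\in X}d^X(h(x),x)<\infty$. For a subgroup $\mathcal G$ of the autohomeomorphism group of $X$, $X$ is $\mathcal G$-shift-compact if for any convergent sequence $x_n\to x_0$ in $X$, any open $U\subseteq X$ and any set $T$ with the Baire property that is co-meagre in $U$, there is $g\in\mathcal G$ with $g(x_n)\in T\cap U$ for all $n$ in some infinite set (along a subsequence). *)

From Stdlib Require Import Reals Classical.
Open Scope R_scope.

Section MetricDefs.
Context {X : Type} (d : X -> X -> R).

Definition is_metric : Prop :=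
  (forall x y, 0 <= d x y) /\
  (forall x y, d x y = 0 <-> x = y) /\
  (forall x y, d x y = d y x) /\
  (forall x y z, d x z <= d x y + d y z).

Definition ball (x : X) (r : R) : X -> Prop := fun y => d x y < r.

Definition is_open (U : X -> Prop) : Prop :=
  forall x, U x -> exists r, 0 < r /\ (forall y, ball x r y -> U y).

Definition closure (A : X -> Prop) : X -> Prop :=
  fun x => forall r, 0 < r -> exists y, A y /\ d x y < r.

Definition nowhere_dense (A : X -> Prop) : Prop :=
  forall V, is_open V -> (forall y, V y -> closure A y) -> forall y, ~ V y.

Definition meagre (A : X -> Prop) : Prop :=
  exists N : nat -> (X -> Prop),
    (forall n, nowhere_dense (N n)) /\
    (forall x, A x -> exists n, N n x).

Definition baire_property (A : X -> Prop) : Prop :=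
  exists V, is_open V /\
    meagre (fun x => (A x /\ ~ V x) \/ (V x /\ ~ A x)).

Definition comeagre_in (T U : X -> Prop) : Prop :=
  meagre (fun x => U x /\ ~ T x).

Definition baire_space : Prop :=
  forall U, is_open U -> (exists x, U x) -> ~ meagre U.

Definition converges (x : nat -> X) (x0 : X) : Prop :=
  forall eps, 0 < eps -> exists N, forall n, (N <= n)%nat -> d (x n) x0 < eps.

Definition continuous_map (f : X -> X) : Prop :=
  forall x eps, 0 < eps -> exists delta, 0 < delta /\
    forall y, d x y < delta -> d (f x) (f y) < eps.

Definition autohomeo (h : X -> X) : Prop :=
  continuous_map h /\
  exists g : X -> X, continuous_map g /\
    (forall x, g (h x) = x) /\ (forall x, h (g x) = x).

Definition in_H (h : X -> X) : Prop :=
  autohomeo h /\ exists M, forall x, d (h x) x <= M.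

Definition subgroup_of_H (G : (X -> X) -> Prop) : Prop :=
  (forall h, G h -> in_H h) /\
  G (fun x => x) /\
  (forall g h, G g -> G h -> G (fun x => g (h x))) /\
  (forall h, G h -> exists g, G g /\
      (forall x, g (h x) = x) /\ (forall x, h (g x) = x)).

Definition shift_compact (G : (X -> X) -> Prop) : Prop :=
  forall (x : nat -> X) (x0 : X), converges x x0 ->
  forall U : X -> Prop, is_open U -> (exists y, U y) ->
  forall T : X -> Prop, baire_property T -> comeagre_in T U ->
  exists g, G g /\
    (forall N, exists n, (N <= n)%nat /\ T (g (x n)) /\ U (g (x n))).

End MetricDefs.

From Stdlib Require Import Reals Lra.
Open Scope R_scope.

(* If a non-empty open set U were meagre, the empty set would be co-meagre in U
   (and trivially has the Baire property); shift-compactness applied to any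
   convergent sequence, e.g. a constant one, would then translate infinitely
   many of its terms into the empty set. *)

Section MeagreSets.
Context {X : Type} (d : X -> X -> R).

Lemma nowhere_dense_empty : nowhere_dense d (fun _ => False).
Proof.
  intros V _ Hcl y Vy.
  destruct (Hcl y Vy 1 ltac:(lra)) as [z [[] _]].
Qed.

Lemma meagre_empty : meagre d (fun _ => False).
Proof.
  exists (fun _ _ => False); split.
  - intros _; exact nowhere_dense_empty.
  - intros x [].
Qed.

Lemma meagre_sub (A B : X -> Prop) :
  meagre d A -> (forall x, B x -> A x) -> meagre d B.
Proof.
  intros [N [HN Hcov]] HBA.
  exists N; split; [exact HN|].
  intros x Bx; exact (Hcov x (HBA x Bx)).
Qed.

Lemma is_open_empty : is_open d (fun _ => False).
Proof. intros x []. Qed.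

Lemma baire_property_empty : baire_property d (fun _ => False).
Proof.
  exists (fun _ => False); split; [exact is_open_empty|].
  apply (meagre_sub _ _ meagre_empty).
  intros x [[[] _] | [[] _]].
Qed.

Lemma comeagre_in_empty (U : X -> Prop) :
  meagre d U -> comeagre_in d (fun _ => False) U.
Proof.
  intros HU; apply (meagre_sub _ _ HU).
  intros x [Ux _]; exact Ux.
Qed.

End MeagreSets.

Lemma converges_const {X : Type} (d : X -> X -> R) (x0 : X) :
  is_metric d -> converges d (fun _ => x0) x0.
Proof.
  intros [_ [Hd0 _]] eps Heps.
  exists 0%nat; intros n _.
  rewrite (proj2 (Hd0 x0 x0) eq_refl); exact Heps.
Qed.

Theorem propositionB1 (X : Type) (d : X -> X -> R) (G : (X -> X) -> Prop) :
  is_metric d -> subgroup_of_H d G -> shift_compact d G -> baire_space d.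
Proof.
  intros Hmetric _ Hsc U HU [x0 Ux0] HmeagreU.
  destruct (Hsc (fun _ => x0) x0 (converges_const d x0 Hmetric)
              U HU (ex_intro _ x0 Ux0)
              (fun _ => False) (baire_property_empty d)
              (comeagre_in_empty d U HmeagreU))
    as [g [_ Hg]].
  destruct (Hg 0%nat) as [n [_ [[] _]]].
Qed.
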